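(* Let $C$ be a transcendental kernel configuration, $(\mathcal M,\theta)\models T_\theta^C$, and $f\in K[X]_{\mathrm{irr}}$ with $C(f)<\infty$. For every $v\in\mathrm{Im}(f^{C(f)}[\theta])\setminus\mathrm{Im}(f^{C(f)+1}[\theta])$ there is an extension $(\mathcal M',\theta')\supseteq(\mathcal M,\theta)$ with $(\mathcal M',\theta')\models T_\theta^C$ and $v\in\mathrm{Im}(f^{C(f)+1}[\theta'])$.
   Context: Setting: $L$ is a first-order language, $T$ a model-complete $L$-theory and $K$ a field. There are $L$-formulas without parameters which define, in every model $\mathcal M\models T$, a nontrivial $K$-vector space $\mathbb V=\mathbb V^{\mathcal M}$; elements of $\mathbb V$ are treated as single elements. $L_\theta=L\cup\{\theta\}$, $\theta$ a new unary function symbol; $T_\theta$ is $T$ plus axioms saying $\theta|_{\mathbb V}$ is a $K$-linear endomorphism of $\mathbb V$ and $\theta(x)=0$ for $x\notin\mathbb V$. For $\rho=\sum_i(\rho)_iX^i\in K[X]$, $\rho[\theta]:=\sum_i(\rho)_i\theta^i$; images and kernels are taken in $\mathbb V$. $K[X]_{\mathrm{irr}}$ is the set of monic irreducible polynomials. A kernel configuration is a pair $C=(c,d)$ with $c:K[X]_{\mathrm{irr}}\to\mathbb N\cup\{\infty\}$, $d\in\mathbb N_{>0}\cup\{\infty\}$ such that $d=\infty$ or $d=\sum_f\deg(f)c(f)$; write $C(f)=c(f)$; $C$ is transcendental if $d=\infty$. For transcendental $C$, $\theta$ is a $C$-endomorphism if $\mathrm{Ker}(f^{C(f)}[\theta])=\mathrm{Ker}(f^{C(f)+1}[\theta])$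 for all $f$ with $C(f)<\infty$, and $T^C_\theta:=T_\theta\cup\{\theta|_{\mathbb V}\text{ is a }C\text{-endomorphism}\}$. *)

From mathcomp Require Import all_boot all_algebra.
Set Implicit Arguments. Unset Strict Implicit. Unset Printing Implicit Defensive.
Import GRing.Theory.
Local Open Scope ring_scope.

Record signature := Signature {
  fsym : Type; fun_ar : fsym -> nat;
  rsym : Type; rel_ar : rsym -> nat }.

Section FOL.
Variable S : signature.

Inductive term :=
  | tvar : nat -> term
  | tapp (f : fsym S) : ('I_(fun_ar f) -> term) -> term.

(* de Bruijn variables: Fall / Fex bind variable 0 *)
Inductive formula :=
  | Fbot : formula
  | Feq : term -> term -> formula
  | Frel (r : rsym S) : ('I_(rel_ar r) -> term) -> formula
  | Fnot : formula -> formula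
  | Fand : formula -> formula -> formula
  | For : formula -> formula -> formula
  | Fimp : formula -> formula -> formula
  | Fall : formula -> formula
  | Fex : formula -> formula.

Record structure := Structure {
  dom :> Type;
  ifun : forall f : fsym S, ('I_(fun_ar f) -> dom) -> dom;
  irel : forall r : rsym S, ('I_(rel_ar r) -> dom) -> Prop }.

Definition scons (D : Type) (x : D) (env : nat -> D) : nat -> D :=
  fun n => match n with 0 => x | n'.+1 => env n' end.

Fixpoint teval (M : structure) (env : nat -> M) (t : term) : M :=
  match t with
  | tvar n => env n
  | tapp f args => @ifun M f (fun i => teval env (args i))
  end.

Fixpoint sat (M : structure) (env : nat -> M) (phi : formula) : Prop :=
  match phi with
  | Fbot => False
  | Feq t u => teval env t = teval env u
  | Frel r args => @irel M r (fun i => teval env (args i))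
  | Fnot p => ~ sat env p
  | Fand p q => sat env p /\ sat env q
  | For p q => sat env p \/ sat env q
  | Fimp p q => sat env p -> sat env q
  | Fall p => forall x : M, sat (scons x env) p
  | Fex p => exists x : M, sat (scons x env) p
  end.

Definition theory := formula -> Prop.
Definition model (T : theory) (M : structure) : Prop :=
  forall phi, T phi -> forall env : nat -> M, sat env phi.

(* L-embeddings (extensions up to identification of M with its image). *)
Definition embedding (M N : structure) (e : M -> N) : Prop :=
  [/\ injective e,
      (forall f args, e (@ifun M f args) = @ifun N f (fun i => e (args i))) &
      (forall r args, @irel M r args <-> @irel N r (fun i => e (args i)))].

Definition elementary (M N : structure) (e : M -> N) : Prop :=
  forall phi (env : nat -> M), sat env phi <-> sat (fun n => e (env n)) phi.

Definition model_complete (T : theory) : Prop :=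
  forall (M N : structure) (e : M -> N),
    model T M -> model T N -> embedding e -> elementary e.

End FOL.

Section DefVS.
Variable S : signature.
Variable K : fieldType.

(* Parameter-free formulas: fV (free var 0) defines the underlying set of V,
   fAdd (free vars 0,1,2) the graph of addition, fSmul c (free vars 0,1)
   the graph of scalar multiplication by c. *)
Record vs_formulas := VSFormulas {
  fV : formula S; fAdd : formula S; fSmul : K -> formula S }.

Variable D : vs_formulas.

Definition env1 (M : structure S) (x : M) : nat -> M := fun _ => x.
Definition env2 (M : structure S) (x y : M) : nat -> M := scons x (env1 y).
Definition env3 (M : structure S) (x y z : M) : nat -> M :=
  scons x (scons y (env1 z)).

Definition inV (M : structure S) (x : M) : Prop := sat (env1 x) (fV D).
Definition addR (M : structure S) (x y z : M) : Prop := sat (env3 x y z) (fAdd D).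
Definition smulR (M : structure S) (c : K) (x y : M) : Prop :=
  sat (env2 x y) (fSmul D c).

Definition defines_vs (M : structure S) : Prop :=
  exists (W : lmodType K) (i : W -> M),
    [/\ injective i,
        (forall x, inV x <-> exists w, x = i w),
        (forall x y z, addR x y z <->
             exists a b, [/\ x = i a, y = i b & z = i (a + b)]),
        (forall c x y, smulR c x y <-> exists a, x = i a /\ y = i (c *: a)) &
        exists w : W, w != 0].

Definition defines_vs_in (T : theory S) : Prop :=
  forall M : structure S, model T M -> defines_vs M.

Definition isZeroV (M : structure S) (z : M) : Prop :=
  inV z /\ forall x, inV x -> addR x z x.

(* (M, theta) |= T_theta (besides M |= T): theta|V is a K-linear endomorphism
   of V and theta x = 0 for x outside V. *)
Definition lin_endo (M : structure S) (theta : M -> M) : Prop :=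
  [/\ (forall x, inV x -> inV (theta x)),
      (forall x, ~ inV x -> isZeroV (theta x)),
      (forall x y z, addR x y z -> addR (theta x) (theta y) (theta z)) &
      (forall c x y, smulR c x y -> smulR c (theta x) (theta y))].

Definition model_Ttheta (T : theory S) (M : structure S) (theta : M -> M) :=
  model T M /\ lin_endo theta.

(* rho[theta] w = v, computed by Horner's scheme on the coefficient list
   (lowest degree first): (c + X q)[theta] w = c w + theta (q[theta] w). *)
Fixpoint pevalR (M : structure S) (theta : M -> M) (s : seq K) (w v : M)
  : Prop :=
  match s with
  | [::] => isZeroV v
  | c :: s' => exists u a, [/\ pevalR theta s' w u, smulR c w a &
                                addR a (theta u) v]
  end.

Definition polyAt (M : structure S) (theta : M -> M) (rho : {poly K}) (w v : M)
  : Prop := pevalR theta (polyseq rho) w v.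

Definition inIm (M : structure S) (theta : M -> M) (rho : {poly K}) (v : M)
  : Prop := exists w, inV w /\ polyAt theta rho w v.
Definition inKer (M : structure S) (theta : M -> M) (rho : {poly K}) (w : M)
  : Prop := inV w /\ exists z, polyAt theta rho w z /\ isZeroV z.

End DefVS.

Definition monic_irr (K : fieldType) (f : {poly K}) : Prop :=
  f \is monic /\ irreducible_poly f.

(* C = (c, d); None encodes infinity.  If d is finite, then
   d = sum_f deg(f) c(f), i.e. c is finite everywhere, has finite support
   on monic irreducibles, and the (finite) sum equals d. *)
Record kconf (K : fieldType) := KConf {
  kc : {poly K} -> option nat;
  kd : option nat;
  kd_pos : forall n, kd = Some n -> (0 < n)%N;
  kd_sum : forall n, kd = Some n ->
    exists s : seq {poly K},
      [/\ uniq s, (forall f, f \in s -> monic_irr f),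
          (forall f, monic_irr f -> f \notin s -> kc f = Some 0%N),
          (forall f, f \in s -> kc f <> None) &
          n = (\sum_(f <- s) (size f).-1 * odflt 0%N (kc f))%N] }.

Definition transcendental (K : fieldType) (C : kconf K) : Prop := kd C = None.

Section CEndo.
Variables (S : signature) (K : fieldType) (D : vs_formulas S K).

Definition C_endo (C : kconf K) (M : structure S) (theta : M -> M) : Prop :=
  forall (f : {poly K}) (n : nat), monic_irr f -> kc C f = Some n ->
    forall w : M, inKer D theta (f ^+ n) w <-> inKer D theta (f ^+ n.+1) w.

Definition model_TthetaC (T : theory S) (C : kconf K) (M : structure S)
  (theta : M -> M) : Prop :=
  model_Ttheta D T theta /\ C_endo C theta.

End CEndo.

From mathcomp Require Import all_boot all_algebra.
From mathcomp Require Import boolp classical_sets filter.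
Set Implicit Arguments. Unset Strict Implicit. Unset Printing Implicit Defensive.
Import GRing.Theory.
Local Open Scope ring_scope.

(* Write theta = i g i^-1 on the definable vector space V, and v = w0 = f^n(g) u0.  The
   kernel condition for f and w0 \notin Im f^(n+1)(g) make the f(g)-orbit of w0 free.  Pass
   to an ultrapower M^U of M over a nonprincipal ultrafilter on nat (a model of T by Los),
   with V^U = V^nat/U and g^U the ultrapower of g.  The classes of k |-> (P X^k)(f(g)) w0
   give a copy eps(K[X]) of K[X] in V^U meeting the diagonal copy of V trivially, so
   V^U = B (+) eps(K[X]) with V contained in B, and multiplying by X^deg(f) identifies V^U
   with V^U (+) K[X]/(f), which carries the extension of g^U obtained by adjoining a
   vector e with f e = u0.  Transported back to V^U, this endomorphism agrees
   with g on V, keeps every kernel condition (for f because w0 \notin Im f^(n+1)(g^U), for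
   the other h by coprimality with f), and maps e to w0 under f^(n+1). *)

Lemma exists_nonprincipal_ultrafilter :
  exists U : set_system nat, UltraFilter U /\ forall m, U (fun k => (m <= k)%N).
Proof.
have [U [UU subU]] := ultraFilterLemma (@eventually_filter).
by exists U; split => // m; apply: subU; exists m.
Qed.

Lemma choose_pointwise (T : Type) (P : nat -> T -> Prop) (x0 : nat -> T) :
  exists x : nat -> T, forall k, (exists m, P k m) -> P k (x k).
Proof.
suff [x Px] : {x & forall k, (exists m, P k m) -> P k (x k)} by exists x.
apply: (@choice _ _ (fun k m => (exists m, P k m) -> P k m)) => k.
by have [[m Pm]|nP] := pselect (exists m, P k m); [exists m | exists (x0 k)].
Qed.

Section Ultrapower.
Variables (S : signature) (U : set_system nat).
Context {UU : UltraFilter U}.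
Variable M : structure S.

Definition ueq (x y : nat -> M) := U (fun k => x k = y k).

Lemma ueq_refl x : ueq x x.
Proof. exact: filterE. Qed.

Lemma ueq_trans y x z : ueq x y -> ueq y z -> ueq x z.
Proof. by apply: filterS2 => k -> ->. Qed.

Lemma ueq_sym x y : ueq x y -> ueq y x.
Proof. by apply: filterS. Qed.

Definition ultraprod := {A : set (nat -> M) | exists x, A = ueq x}.

Definition cl (x : nat -> M) : ultraprod := exist _ (ueq x) (ex_intro _ x erefl).

Definition rep (a : ultraprod) : nat -> M := sval (cid (svalP a)).

Lemma cl_rep a : cl (rep a) = a.
Proof. by case: a => A hA; apply: eq_exist; rewrite /rep /=; case: cid. Qed.

Lemma cl_eq x y : cl x = cl y <-> ueq x y.
Proof.
split=> [/(congr1 sval) /= exy | xy]; first by rewrite exy; exact: ueq_refl.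
apply: eq_exist; apply/funext => z /=; apply/propext.
by split; apply: ueq_trans; [exact: ueq_sym|].
Qed.

Lemma rep_cl x : ueq (rep (cl x)) x.
Proof. by apply/cl_eq; rewrite cl_rep. Qed.

Definition ultrapower : structure S :=
  {| dom := ultraprod;
     ifun := fun f args => cl (fun k => ifun (fun j => rep (args j) k));
     irel := fun r args => U (fun k => irel (fun j => rep (args j) k)) |}.

Definition env_at (env : nat -> ultrapower) (k : nat) : nat -> M :=
  fun n => rep (env n) k.

Lemma teval_los (env : nat -> ultrapower) (t : term S) :
  teval env t = cl (fun k => teval (env_at env k) t).
Proof.
elim: t => [n|f args IH] /=; first by rewrite cl_rep.
apply/cl_eq; have /filter_forall : forall j, ueq (rep (teval env (args j)))
    (fun k => teval (env_at env k) (args j)) by move=> j; rewrite IH; exact: rep_cl.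
by apply: filterS => k /funext ->.
Qed.

Lemma rep_teval_ae (env : nat -> ultrapower) m (args : 'I_m -> term S) :
  U (fun k => forall j, rep (teval env (args j)) k = teval (env_at env k) (args j)).
Proof. by apply: filter_forall => j; rewrite teval_los; exact: rep_cl. Qed.

Lemma U_not A : ~ U A <-> U (fun k => ~ A k).
Proof.
split=> [nA | nA hA]; first by case: (in_ultra_setVsetC A UU).
by have [k []] := filter_ex (filterI hA nA).
Qed.

Lemma env_at_scons (x : ultrapower) env k :
  env_at (scons x env) k = scons (rep x k) (env_at env k).
Proof. by apply/funext => -[]. Qed.

Theorem los (phi : formula S) (env : nat -> ultrapower) :
  sat env phi <-> U (fun k => sat (env_at env k) phi).
Proof.
elim: phi env => [|t1 t2|r args|p IH|p IHp q IHq|p IHp q IHq|p IHp q IHq|p IH|p IH]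
  env /=.
- by split=> // /filter_const.
- by rewrite !teval_los cl_eq.
- by split; apply: filterS2 (rep_teval_ae env args) => k /funext ->.
- by rewrite IH U_not.
- rewrite IHp IHq; split=> [[]|pq]; first exact: filterI.
  by split; apply: filterS pq => k [].
- rewrite IHp IHq; split=> [[]|pq]; first by apply: filterS => k; left.
    by apply: filterS => k; right.
  have [Up|/U_not nUp] := pselect (U (fun k => sat (env_at env k) p)); first by left.
  by right; apply: filterS2 pq nUp => k [].
- rewrite IHp IHq; split=> [pq|pq Up]; last by apply: filterS2 pq Up => k; apply.
  have [Up|/U_not nUp] := pselect (U (fun k => sat (env_at env k) p)).
    by apply: filterS (pq Up) => k.
  by apply: filterS nUp => k nPk /nPk.
- split=> [allp|allp x]; last first.
    by apply/IH; apply: filterS allp => k; rewrite env_at_scons.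
  apply: contrapT => /U_not nallp.
  have [x hx] := choose_pointwise (fun k m => ~ sat (scons m (env_at env k)) p)
    (env_at env 0).
  have /IH := allp (cl x).
  move=> /(filterI (filterI nallp (rep_cl x))) /filter_ex [k [[/existsNP/hx nPk ex] Pk]].
  by apply: nPk; rewrite -ex -env_at_scons.
- split=> [[x /IH]|exp]; first by apply: filterS => k; rewrite env_at_scons; exists (rep x k).
  have [x hx] := choose_pointwise (fun k m => sat (scons m (env_at env k)) p) (env_at env 0).
  exists (cl x); apply/IH; apply: filterS2 exp (rep_cl x) => k /hx Pk ex.
  by rewrite env_at_scons ex.
Qed.

Lemma los_at (phi : formula S) (env : nat -> ultrapower) (E : nat -> nat -> M) :
  U (fun k => env_at env k = E k) -> sat env phi <-> U (fun k => sat (E k) phi).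
Proof. by move=> envE; rewrite los; split; apply: filterS2 envE => k ->. Qed.

Definition diag (x : M) : ultrapower := cl (fun _ => x).

Lemma rep_diag_ae m (x : 'I_m -> M) : U (fun k => forall j, rep (diag (x j)) k = x j).
Proof. by apply: filter_forall => j; exact: rep_cl. Qed.

Lemma diag_embedding : embedding diag.
Proof.
split=> [x y /cl_eq /filter_ex [] //|f args|r args] /=.
  by apply/cl_eq; apply: filterS (rep_diag_ae args) => k /funext ->.
split=> [Rargs | /(filterI (rep_diag_ae args)) /filter_ex [k [/funext -> //]]].
by apply: filterS (rep_diag_ae args) => k /funext ->.
Qed.

Lemma model_ultrapower (T : theory S) : model T M -> model T ultrapower.
Proof. by move=> MT phi Tphi env; apply/los; apply: filterE => k; exact: MT. Qed.

End Ultrapower.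

Section AdditiveScalable.
Variables (R : pzRingType) (U V : lmodType R) (h : U -> V).
Hypotheses (hD : {morph h : a b / a + b}) (hZ : scalable h).

Lemma lin0 : h 0 = 0.
Proof. by have := hZ 0 0; rewrite !scale0r. Qed.

Lemma linN a : h (- a) = - h a.
Proof. by rewrite -scaleN1r hZ scaleN1r. Qed.

Lemma linB a b : h (a - b) = h a - h b.
Proof. by rewrite hD linN. Qed.

End AdditiveScalable.

Section PolyAction.
Variables (K : fieldType) (W : lmodType K) (g : W -> W).

Definition peval (p : {poly K}) (w : W) : W := \sum_(i < size p) p`_i *: iter i g w.

Definition ker_exp_stable (h : {poly K}) (c : nat) : Prop :=
  forall w, peval (h ^+ c.+1) w = 0 -> peval (h ^+ c) w = 0.

Lemma peval_widen (p : {poly K}) m : (size p <= m)%N ->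
  forall w, peval p w = \sum_(i < m) p`_i *: iter i g w.
Proof.
move=> szp w; rewrite /peval (big_ord_widen _ (fun i => p`_i *: iter i g w) szp).
rewrite big_mkcond /=; apply: eq_bigr => i _.
by case: ltnP => // /(nth_default 0) ->; rewrite scale0r.
Qed.

Lemma pevalD (p q : {poly K}) w : peval (p + q) w = peval p w + peval q w.
Proof.
rewrite (peval_widen (size_polyD p q)) (peval_widen (leq_maxl (size p) (size q))).
rewrite (peval_widen (leq_maxr (size p) (size q))) -big_split /=.
by apply: eq_bigr => i _; rewrite coefD scalerDl.
Qed.

Lemma pevalZ c (p : {poly K}) w : peval (c *: p) w = c *: peval p w.
Proof.
rewrite (peval_widen (size_scale_leq c p)) /peval scaler_sumr.
by apply: eq_bigr => i _; rewrite coefZ scalerA.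
Qed.

Lemma peval0 w : peval 0 w = 0.
Proof. by rewrite /peval size_poly0 big_ord0. Qed.

Lemma pevalB (p q : {poly K}) w : peval (p - q) w = peval p w - peval q w.
Proof. by rewrite pevalD -[- q]scaleN1r pevalZ scaleN1r. Qed.

Lemma pevalC c w : peval c%:P w = c *: w.
Proof. by rewrite (peval_widen (size_polyC_leq1 c)) big_ord1 coefC. Qed.

Lemma peval1 w : peval 1 w = w.
Proof. by rewrite pevalC scale1r. Qed.

Lemma peval_mulX (p : {poly K}) w : peval (p * 'X) w = peval p (g w).
Proof.
have szpX : (size (p * 'X)%R <= (size p).+1)%N.
  by have [->|p0] := eqVneq p 0; rewrite ?mul0r ?size_poly0 ?size_mulX.
rewrite (peval_widen szpX) big_ord_recl coefMX eqxx scale0r add0r.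
by apply: eq_bigr => i _; rewrite coefMX /= -iterSr.
Qed.

Hypotheses (gD : {morph g : a b / a + b}) (gZ : scalable g).

Lemma iter_additive m : {morph iter m g : a b / a + b}.
Proof. by move=> a b; elim: m => //= m ->; rewrite gD. Qed.

Lemma iter_scalable m : scalable (iter m g).
Proof. by move=> c a; elim: m => //= m ->; rewrite gZ. Qed.

Lemma peval_additive (p : {poly K}) : {morph peval p : a b / a + b}.
Proof.
move=> a b; rewrite /peval -big_split; apply: eq_bigr => i _.
by rewrite iter_additive scalerDr.
Qed.

Lemma peval_scalable (p : {poly K}) : scalable (peval p).
Proof.
move=> c a; rewrite /peval scaler_sumr; apply: eq_bigr => i _.
by rewrite iter_scalable !scalerA mulrC.
Qed.

Lemma peval_comm (p : {poly K}) w : peval p (g w) = g (peval p w).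
Proof.
rewrite /peval (big_morph g gD (lin0 gZ)).
by apply: eq_bigr => i _; rewrite gZ -iterSr.
Qed.

Lemma peval_iter (p : {poly K}) k w : peval p (iter k g w) = iter k g (peval p w).
Proof. by elim: k => //= k IH; rewrite peval_comm IH. Qed.

Lemma pevalM (p q : {poly K}) w : peval (p * q) w = peval p (peval q w).
Proof.
elim/poly_ind: q w => [|q c IH] w.
  by rewrite mulr0 !peval0 (lin0 (peval_scalable p)).
rewrite mulrDr mulrA !pevalD !peval_mulX IH [p * _%:P]mulrC mul_polyC pevalZ.
by rewrite pevalC peval_additive peval_scalable.
Qed.

Lemma peval_commute (p q : {poly K}) w : peval p (peval q w) = peval q (peval p w).
Proof. by rewrite -!pevalM mulrC. Qed.

Lemma pevalX w : peval 'X w = g w.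
Proof. by rewrite -['X]mul1r peval_mulX peval1. Qed.

Lemma pevalXn (p : {poly K}) m w : peval (p ^+ m) w = iter m (peval p) w.
Proof. by elim: m => [|m IH]; rewrite ?expr0 ?peval1 // exprS pevalM IH. Qed.

End PolyAction.

Section VectorSpaceEmbedding.
Variables (S : signature) (K : fieldType) (D : vs_formulas S K).

Record vs_embedding (N : structure S) (W : lmodType K) (i : W -> N) : Prop := {
  vs_inj : injective i;
  vs_inV : forall x, inV D x <-> exists w, x = i w;
  vs_addR : forall x y z,
    addR D x y z <-> exists a b, [/\ x = i a, y = i b & z = i (a + b)];
  vs_smulR : forall c x y, smulR D c x y <-> exists a, x = i a /\ y = i (c *: a) }.

Lemma defines_vsP N : defines_vs D N -> exists (W : lmodType K) (i : W -> N), vs_embedding i.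
Proof. by move=> [W [i [? ? ? ? _]]]; exists W, i. Qed.

Variables (N : structure S) (W : lmodType K) (i : W -> N).
Hypothesis hi : vs_embedding i.

Let i_inj := vs_inj hi.
Let inV_i := vs_inV hi.
Let addR_i := vs_addR hi.
Let smulR_i := vs_smulR hi.

Lemma isZeroV_iff z : isZeroV D z <-> z = i 0.
Proof.
split=> [[/inV_i [a ->] a_zero] | ->].
  have /addR_i [b [c [/i_inj <- /i_inj <- /i_inj]]] : addR D (i 0) (i a) (i 0).
    by apply/a_zero/inV_i; exists 0.
  by rewrite add0r => ->.
split=> [|x /inV_i [a ->]]; first by apply/inV_i; exists 0.
by apply/addR_i; exists a, 0; rewrite addr0.
Qed.

Section Endomorphism.
Variables (theta : N -> N) (g : W -> W).
Hypotheses (gD : {morph g : a b / a + b}) (gZ : scalable g)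
  (theta_i : forall w, theta (i w) = i (g w)).

Lemma pevalR_iff s w z :
  pevalR D theta s (i w) z <-> z = i (\sum_(j < size s) s`_j *: iter j g w).
Proof.
elim: s z => [|c s IH] z /=; first by rewrite big_ord0; exact: isZeroV_iff.
have -> : \sum_(j < (size s).+1) (c :: s)`_j *: iter j g w =
    c *: w + g (\sum_(j < size s) s`_j *: iter j g w).
  rewrite big_ord_recl (big_morph g gD (lin0 gZ)); congr (_ + _).
  by apply: eq_bigr => j _; rewrite gZ.
split=> [[u [a [/IH -> /smulR_i [b [/i_inj <- ->]] /addR_i [a' [b' [/i_inj <- ]]]]]] | ->].
  by rewrite theta_i => /i_inj <- ->.
exists (i (\sum_(j < size s) s`_j *: iter j g w)), (i (c *: w)); split.
- exact/IH.
- by apply/smulR_i; exists w.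
- by apply/addR_i; exists (c *: w), (g (\sum_(j < size s) s`_j *: iter j g w)); rewrite theta_i.
Qed.

Lemma polyAt_iff p w z : polyAt D theta p (i w) z <-> z = i (peval g p w).
Proof. exact: pevalR_iff. Qed.

Lemma inIm_iff p y : inIm D theta p y <-> exists w, y = i (peval g p w).
Proof.
split=> [[x [/inV_i [w ->] /polyAt_iff ->]] | [w ->]]; first by exists w.
by exists (i w); split; [apply/inV_i; exists w | exact/polyAt_iff].
Qed.

Lemma inKer_iff p y : inKer D theta p y <-> exists w, y = i w /\ peval g p w = 0.
Proof.
split=> [[/inV_i [w ->] [z [/polyAt_iff -> /isZeroV_iff /i_inj pw0]]] | [w [-> pw0]]].
  by exists w.
split; first by apply/inV_i; exists w.
by exists (i (peval g p w)); split; [exact/polyAt_iff | apply/isZeroV_iff; rewrite pw0].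
Qed.

Lemma C_endo_iff C : C_endo D C theta <->
  forall h c, monic_irr h -> kc C h = Some c -> ker_exp_stable g h c.
Proof.
split=> [Ctheta h c hh hc w hw | gC h c hh hc y].
  have /(Ctheta h c hh hc) : inKer D theta (h ^+ c.+1) (i w).
    by apply/inKer_iff; exists w.
  by move=> /inKer_iff [w' [/i_inj <-]].
rewrite !inKer_iff; split=> -[w [-> hw]]; exists w; split => //.
  by rewrite exprS (pevalM gD gZ) hw (lin0 (peval_scalable gZ _)).
exact: gC.
Qed.

End Endomorphism.

Lemma lin_endo_module theta : lin_endo D theta ->
  exists g : W -> W, [/\ {morph g : a b / a + b}, scalable g,
    (forall w, theta (i w) = i (g w)) & (forall x, ~ inV D x -> theta x = i 0)].
Proof.
move=> [thetaV theta_out thetaD thetaZ].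
have [g theta_i] : {g : W -> W & forall w, theta (i w) = i (g w)}.
  apply: (@choice _ _ (fun w w' => theta (i w) = i w')) => w.
  by apply/inV_i/thetaV/inV_i; exists w.
exists g; split=> // [a b | c a | x /theta_out /isZeroV_iff //].
  have /thetaD : addR D (i a) (i b) (i (a + b)) by apply/addR_i; exists a, b.
  by rewrite !theta_i => /addR_i [a' [b' [/i_inj <- /i_inj <- /i_inj ->]]].
have /thetaZ : smulR D c (i a) (i (c *: a)) by apply/smulR_i; exists a.
by rewrite !theta_i => /smulR_i [a' [/i_inj <- /i_inj ->]].
Qed.

Definition thetaOf (g : W -> W) (x : N) : N :=
  if pselect (exists w, x = i w) is left ex then i (g (sval (cid ex))) else i 0.

Lemma thetaOf_i g w : thetaOf g (i w) = i (g w).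
Proof.
rewrite /thetaOf; case: pselect => [ex|]; last by case; exists w.
by case: cid => w' /= /i_inj ->.
Qed.

Lemma thetaOf_out g x : ~ inV D x -> thetaOf g x = i 0.
Proof. by rewrite /thetaOf inV_i; case: pselect. Qed.

Lemma model_TthetaC_thetaOf T C g : model T N ->
  {morph g : a b / a + b} -> scalable g ->
  (forall h c, monic_irr h -> kc C h = Some c -> ker_exp_stable g h c) ->
  model_TthetaC D T C (thetaOf g).
Proof.
move=> NT gD gZ gC; split; last exact/(C_endo_iff gD gZ (thetaOf_i g)).
split=> //; split.
- by move=> x /inV_i [w ->]; rewrite thetaOf_i; apply/inV_i; exists (g w).
- by move=> x /thetaOf_out ->; apply/isZeroV_iff.
- move=> x y z /addR_i [a [b [-> -> ->]]]; rewrite !thetaOf_i; apply/addR_i.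
  by exists (g a), (g b); rewrite gD.
- move=> c x y /smulR_i [a [-> ->]]; rewrite !thetaOf_i; apply/smulR_i.
  by exists (g a); rewrite gZ.
Qed.

End VectorSpaceEmbedding.

Section UltrapowerVectorSpace.
Variables (S : signature) (K : fieldType) (D : vs_formulas S K) (U : set_system nat).
Context {UU : UltraFilter U}.
Variables (M : structure S) (W : lmodType K) (i : W -> M).
Hypothesis hi : vs_embedding D i.
Local Notation M' := (ultrapower U M).
Variables (W' : lmodType K) (i' : W' -> M').
Hypothesis hi' : vs_embedding D i'.

Lemma inV_cl a : inV D (cl U a : M') <-> U (fun k => inV D (a k)).
Proof. by apply: los_at; apply: filterS (rep_cl a) => k ek; apply/funext. Qed.

Lemma addR_cl a b c :
  addR D (cl U a : M') (cl U b) (cl U c) <-> U (fun k => addR D (a k) (b k) (c k)).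
Proof.
apply: los_at; apply: filterS2 (rep_cl a) (filterI (rep_cl b) (rep_cl c)).
by move=> k ea [eb ec]; apply/funext => -[|[|n]].
Qed.

Lemma smulR_cl r a b :
  smulR D r (cl U a : M') (cl U b) <-> U (fun k => smulR D r (a k) (b k)).
Proof.
apply: los_at; apply: filterS2 (rep_cl a) (rep_cl b).
by move=> k ea eb; apply/funext => -[|n].
Qed.

Lemma vclass_subproof (x : nat -> W) : exists w', cl U (fun k => i (x k)) = i' w'.
Proof.
by apply/(vs_inV hi')/inV_cl/filterE => k; apply/(vs_inV hi); exists (x k).
Qed.

Definition vclass (x : nat -> W) : W' := sval (cid (vclass_subproof x)).

Lemma vclassE x : i' (vclass x) = cl U (fun k => i (x k)).
Proof. by rewrite /vclass; case: cid. Qed.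

Lemma vclassD x y : vclass (fun k => x k + y k) = vclass x + vclass y.
Proof.
have : addR D (i' (vclass x)) (i' (vclass y)) (i' (vclass (fun k => x k + y k))).
  rewrite !vclassE; apply/addR_cl/filterE => k.
  by apply/(vs_addR hi); exists (x k), (y k).
by move=> /(vs_addR hi') [a [b [/(vs_inj hi') -> /(vs_inj hi') -> /(vs_inj hi') ->]]].
Qed.

Lemma vclassZ c x : vclass (fun k => c *: x k) = c *: vclass x.
Proof.
have : smulR D c (i' (vclass x)) (i' (vclass (fun k => c *: x k))).
  by rewrite !vclassE; apply/smulR_cl/filterE => k; apply/(vs_smulR hi); exists (x k).
by move=> /(vs_smulR hi') [a [/(vs_inj hi') -> /(vs_inj hi') ->]].
Qed.

Lemma vclass_eq x y : vclass x = vclass y <-> U (fun k => x k = y k).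
Proof.
split=> [/(congr1 i') | exy]; last first.
  by apply: (vs_inj hi'); rewrite !vclassE; apply/cl_eq; apply: filterS exy => k ->.
by rewrite !vclassE => /cl_eq; apply: filterS => k /(vs_inj hi).
Qed.

Lemma vclass_surj w' : exists x, w' = vclass x.
Proof.
have [x hx] := choose_pointwise (fun k w => rep (i' w') k = i w) (fun _ => 0).
exists x; apply: (vs_inj hi'); rewrite vclassE -[i' w']cl_rep; apply/cl_eq.
have /inV_cl : inV D (cl U (rep (i' w')) : M') by rewrite cl_rep; apply/(vs_inV hi'); exists w'.
by apply: filterS => k /(vs_inV hi) /hx.
Qed.

Lemma diag_i w : diag U (i w) = i' (vclass (fun _ => w)).
Proof. by rewrite vclassE. Qed.

Lemma diag_notin_V (x : M) : ~ inV D x -> ~ inV D (diag U x).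
Proof. by move=> nVx /inV_cl /filter_const. Qed.

Lemma vclass0 : vclass (fun _ => 0) = 0.
Proof.
rewrite -(scale0r (vclass (fun _ => 0))) -vclassZ.
by congr vclass; apply/funext => k; rewrite scale0r.
Qed.

Lemma diag_thetaOf (theta : M -> M) (g : W -> W) (g' : W' -> W') :
  (forall w, theta (i w) = i (g w)) -> (forall x, ~ inV D x -> theta x = i 0) ->
  (forall w, g' (vclass (fun _ => w)) = vclass (fun _ => g w)) ->
  forall x, diag U (theta x) = thetaOf i' g' (diag U x).
Proof.
move=> theta_i theta_out g'_diag x.
have [/(vs_inV hi) [w ->] | nVx] := pselect (inV D x).
  by rewrite theta_i !diag_i (thetaOf_i hi') g'_diag.
by rewrite theta_out // (thetaOf_out hi') ?diag_i ?vclass0 //; exact: diag_notin_V.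
Qed.

End UltrapowerVectorSpace.

Section OrbitFree.
Variables (K : fieldType) (W : lmodType K) (phi : W -> W).
Hypotheses (phiD : {morph phi : a b / a + b}) (phiZ : scalable phi).
Variables (m : nat) (u0 : W).
Hypotheses (notin_Im : ~ exists y, iter m phi u0 = iter m.+1 phi y)
  (ker_stable : forall w, iter m.+1 phi w = 0 -> iter m phi w = 0).

(* Write Q = R X + c. If c <> 0, then phi^m u0 = phi (-c^-1 R(phi) phi^m u0) would lie
   in Im phi^(m+1); if c = 0, the kernel condition cancels one phi. *)
Lemma orbit_free (Q : {poly K}) : peval phi Q (iter m phi u0) = 0 -> Q = 0.
Proof.
elim/poly_ind: Q => [//|R c IH].
rewrite pevalD peval_mulX pevalC (peval_comm phiD phiZ) (peval_iter phiD phiZ).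
have [-> | c0] := eqVneq c 0.
  rewrite scale0r addr0 => /ker_stable; rewrite -(peval_iter phiD phiZ) => /IH ->.
  by rewrite mul0r add0r.
move=> /eqP; rewrite addr_eq0 => /eqP Rc; case: notin_Im.
exists (- c^-1 *: peval phi R u0).
by rewrite iter_scalable //= Rc scalerN scalerA mulNr mulVf // scaleN1r opprK.
Qed.

End OrbitFree.

Lemma peval_orbit_free (K : fieldType) (W : lmodType K) (g : W -> W) f n u0 :
  {morph g : a b / a + b} -> scalable g ->
  ~ (exists y, peval g (f ^+ n) u0 = peval g (f ^+ n.+1) y) -> ker_exp_stable g f n ->
  forall Q, peval (peval g f) Q (peval g (f ^+ n) u0) = 0 -> Q = 0.
Proof.
move=> gD gZ notin_Im f_ker; rewrite (pevalXn gD gZ).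
apply: (orbit_free (peval_additive gD f) (peval_scalable gZ f)).
  by move=> [y]; rewrite -!(pevalXn gD gZ) => e; apply: notin_Im; exists y.
by move=> w; rewrite -!(pevalXn gD gZ); exact: f_ker.
Qed.

Section Complement.
Local Open Scope classical_set_scope.
Variables (K : fieldType) (V E : lmodType K) (eps : E -> V).
Hypotheses (epsD : {morph eps : a b / a + b}) (epsZ : scalable eps).

Definition subspace (X : set V) : Prop :=
  [/\ X 0, forall a b, X a -> X b -> X (a + b) & forall c a, X a -> X (c *: a)].

Lemma subspace_range (W : lmodType K) (h : W -> V) :
  {morph h : a b / a + b} -> scalable h -> subspace (fun a => exists w, a = h w).
Proof.
move=> hD hZ; split=> [|_ _ [a ->] [b ->]|c _ [a ->]].
- by exists 0; rewrite (lin0 hZ).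
- by exists (a + b); rewrite hD.
- by exists (c *: a); rewrite hZ.
Qed.

Definition eps_free (X : set V) : Prop := forall x e, X x -> x = eps e -> e = 0.

Record complement (B : set V) : Prop := {
  compl_epsD : {morph eps : a b / a + b};
  compl_epsZ : scalable eps;
  compl_sub : subspace B;
  compl_free : eps_free B;
  compl_span : forall x, exists b e, B b /\ x = b + eps e }.

Variable A : set V.
Hypotheses (A_sub : subspace A) (A_free : eps_free A).

(* [good X] constrains A `|` X rather than X, so that the empty chain has a good union. *)
Let good X := subspace (A `|` X) /\ eps_free (A `|` X).

Let good_chain_pair (F : set (set V)) : F `<=` good -> total_on F subset ->
  forall a b, (A `|` \bigcup_(X in F) X) a -> (A `|` \bigcup_(X in F) X) b ->
  exists2 X, good X /\ X `<=` \bigcup_(Y in F) Y & (A `|` X) a /\ (A `|` X) b.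
Proof.
move=> Fgood Ftot a b.
have goodF X : F X -> good X /\ X `<=` \bigcup_(Y in F) Y.
  by move=> FX; split; [exact: Fgood | exact: bigcup_sup].
case=> [Aa | [X1 FX1 X1a]] [Ab | [X2 FX2 X2b]].
- by exists set0; [rewrite /good setU0; split=> // y [] | split; left].
- by exists X2; [exact: goodF | split; [left | right]].
- by exists X1; [exact: goodF | split; [right | left]].
have [X12 | X21] := Ftot _ _ FX1 FX2.
  by exists X2; [exact: goodF | split; right => //; exact: X12].
by exists X1; [exact: goodF | split; right => //; exact: X21].
Qed.

Let good_bigcup (F : set (set V)) : F `<=` good -> total_on F subset ->
  good (\bigcup_(X in F) X).
Proof.
move=> Fgood Ftot; have pair := good_chain_pair Fgood Ftot.
have into X a : X `<=` \bigcup_(Y in F) Y -> (A `|` X) a -> (A `|` \bigcup_(Y in F) Y) a.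
  by move=> XF [Aa | Xa]; [left | right; exact: XF].
split; first split.
- by left; case: A_sub.
- move=> a b Fa Fb; have [X [[[_ XD _] _] XF] [Xa Xb]] := pair a b Fa Fb.
  exact: into XF (XD a b Xa Xb).
- move=> c a Fa; have [X [[[_ _ XZ] _] XF] [Xa _]] := pair a a Fa Fa.
  exact: into XF (XZ c a Xa).
move=> x e Fx; have [X [[_ Xfree] _] [Xx _]] := pair x x Fx Fx.
exact: Xfree.
Qed.

Lemma exists_complement : exists2 B, A `<=` B & complement B.
Proof.
have [X [[Bsub Bfree] Xmax]] := Zorn_bigcup good_bigcup.
exists (A `|` X); first exact: subsetUl.
split=> // x; apply: contrapT => nx.
have [B0 BD BZ] := Bsub.
pose Y y := exists b c, (A `|` X) b /\ y = b + c *: x.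
have XY : X `<=` Y by move=> y Xy; exists y, 0; split; [right | rewrite scale0r addr0].
have Yx : Y x by exists 0, 1; rewrite scale1r add0r.
apply: (Xmax Y); first split=> // YX.
  by apply: nx; exists x, 0; split; [right; exact: YX | rewrite lin0 // addr0].
rewrite /good setUidr; last first.
  by move=> a Aa; exists a, 0; split; [left | rewrite scale0r addr0].
split; first split.
- by exists 0, 0; rewrite scale0r addr0.
- move=> _ _ [a [c [Ba ->]]] [b [d [Bb ->]]].
  by exists (a + b), (c + d); rewrite scalerDl addrACA; split=> //; exact: BD.
- move=> r _ [a [c [Ba ->]]].
  by exists (r *: a), (r * c); rewrite scalerDr scalerA; split=> //; exact: BZ.
move=> _ e [b [c [Bb ->]]] be.
have [c0 | c0] := eqVneq c 0; first by apply: (Bfree b) => //; rewrite -be c0 scale0r addr0.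
case: nx; exists (- (c^-1 *: b)), (c^-1 *: e); split.
  by rewrite -scaleN1r; exact/BZ/BZ.
by rewrite epsZ -be scalerDr scalerA mulVf // scale1r addKr.
Qed.

End Complement.

Section Decomposition.
Variables (K : fieldType) (V : lmodType K) (eps : {poly K} -> V) (B : set V).
Hypothesis hB : complement eps B.

Let epsD := compl_epsD hB.
Let epsZ := compl_epsZ hB.
Let B_sub := compl_sub hB.
Let B_free := compl_free hB.

Definition decomp (x : V) : V * {poly K} :=
  let: exist b bP := cid (compl_span hB x) in (b, sval (cid bP)).

Lemma decompP x : B (decomp x).1 /\ x = (decomp x).1 + eps (decomp x).2.
Proof. by rewrite /decomp; case: cid => b /= bP; case: cid => P []. Qed.

Lemma decomp_sum b P : B b -> decomp (b + eps P) = (b, P).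
Proof.
move=> Bb; have [] := decompP (b + eps P); case: (decomp _) => b' P' /= Bb' e.
have [B0 BD BZ] := B_sub.
have eb : b - b' = eps (P' - P).
  by rewrite (linB epsD epsZ) -[b](addrK (eps P)) e addrAC [b' + _]addrC addrK.
have Bbb' : B (b - b') by rewrite -scaleN1r; exact: BD Bb (BZ _ _ Bb').
have /eqP := B_free Bbb' eb; rewrite subr_eq0 => /eqP PP'.
rewrite PP' subrr (lin0 epsZ) in eb.
by move/eqP: eb; rewrite subr_eq0 PP' => /eqP ->.
Qed.

Lemma decomp_additive : {morph decomp : x y / x + y}.
Proof.
move=> x y; have [Bx ex] := decompP x; have [By ey] := decompP y.
have [B0 BD BZ] := B_sub.
by rewrite {1}ex {1}ey addrACA -epsD decomp_sum //; exact: BD.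
Qed.

Lemma decomp_scalable : scalable decomp.
Proof.
move=> c x; have [Bx ex] := decompP x; have [B0 BD BZ] := B_sub.
by rewrite {1}ex scalerDr -epsZ decomp_sum //; exact: BZ.
Qed.

Lemma decomp_B b : B b -> decomp b = (b, 0).
Proof. by move=> Bb; rewrite -[b]addr0 -(lin0 epsZ) decomp_sum // (lin0 epsZ) addr0. Qed.

Variable d : nat.

(* shift_in maps V * {s | size s <= d} isomorphically onto V: multiplying the
   eps-component by X^d frees its d lowest coefficients. *)
Definition shift_in (x : V * {poly K}) : V :=
  (decomp x.1).1 + eps ((decomp x.1).2 * 'X^d + x.2).

Definition shift_out (w : V) : V * {poly K} :=
  ((decomp w).1 + eps ((decomp w).2 %/ 'X^d), (decomp w).2 %% 'X^d).

Let Xd_neq0 : 'X^d != 0 :> {poly K}. Proof. exact: monic_neq0 (monicXn _ _). Qed.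

Lemma shift_outK w : shift_in (shift_out w) = w.
Proof.
have [Bw ew] := decompP w.
by rewrite /shift_in /= decomp_sum // -divp_eq -ew.
Qed.

Lemma shift_inK (x : V * {poly K}) : (size x.2 <= d)%N -> shift_out (shift_in x) = x.
Proof.
case: x => a s /= szs; have [Ba ea] := decompP a.
have szs' : (size s < size ('X^d : {poly K}))%N by rewrite size_polyXn.
rewrite /shift_out /shift_in /= decomp_sum //= divpD mulpK // divp_small // addr0 -ea.
by rewrite modpD modp_mull add0r modp_small.
Qed.

Lemma size_shift_out w : (size (shift_out w).2 <= d)%N.
Proof. by rewrite -ltnS -(size_polyXn K d) ltn_modp. Qed.

Lemma shift_in_B b : B b -> shift_in (b, 0) = b.
Proof. by move=> Bb; rewrite /shift_in decomp_B //= mul0r addr0 (lin0 epsZ) addr0. Qed.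

Lemma shift_out_B b : B b -> shift_out b = (b, 0).
Proof. by move=> Bb; rewrite /shift_out decomp_B //= div0p mod0p (lin0 epsZ) addr0. Qed.

Lemma shift_in_additive : {morph shift_in : x y / x + y}.
Proof.
move=> [a s] [b t]; rewrite /shift_in /= decomp_additive /=.
by rewrite mulrDl addrACA epsD addrACA.
Qed.

Lemma shift_in_scalable : scalable shift_in.
Proof.
move=> c [a s]; rewrite /shift_in /= decomp_scalable /=.
by rewrite -scalerAl -scalerDr epsZ scalerDr.
Qed.

Lemma shift_out_additive : {morph shift_out : x y / x + y}.
Proof.
move=> x y; rewrite /shift_out decomp_additive /=.
by rewrite divpD modpD epsD addrACA.
Qed.

Lemma shift_out_scalable : scalable shift_out.
Proof.
move=> c x; rewrite /shift_out decomp_scalable /=.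
by rewrite divpZl modpZl epsZ -scalerDr.
Qed.

End Decomposition.

Section IrreducibleFacts.
Variables (K : fieldType) (f : {poly K}).
Hypothesis f_irr : irreducible_poly f.

Lemma coprimep_irr_small (s : {poly K}) : s != 0 -> (size s < size f)%N -> coprimep f s.
Proof.
move=> s0 szs; rewrite irreducible_poly_coprime //.
by apply/negP => /(dvdp_leq s0); rewrite leqNgt szs.
Qed.

Lemma coprimep_irr_neq h : monic_irr h -> f \is monic -> h != f -> coprimep f h.
Proof.
move=> [h_monic [szh h_irr]] f_monic hf; rewrite irreducible_poly_coprime //.
apply/negP => /(h_irr f); case: f_irr => szf _.
by rewrite neq_ltn szf orbT eqp_monic // eq_sym (negbTE hf) => /(_ isT).
Qed.

Lemma dvdp_coprime_small (h : {poly K}) m (s : {poly K}) :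
  coprimep f h -> f %| h ^+ m * s -> (size s < size f)%N -> s = 0.
Proof.
move=> fh; rewrite Gauss_dvdpr ?coprimep_expr // => /dvdp_leq szs /= ltsf.
by apply/eqP; apply: contraTT ltsf => /szs; rewrite -leqNgt.
Qed.

End IrreducibleFacts.

Section AdjoinedRoot.
Variables (K : fieldType) (V : lmodType K) (gU : V -> V).
Hypotheses (gD : {morph gU : a b / a + b}) (gZ : scalable gU).
Variables (f : {poly K}) (u0 : V).
Hypothesis f_monic : f \is monic.

Let f_neq0 : f != 0. Proof. exact: monic_neq0. Qed.

(* The pair (a, s), with size s < size f, stands for a + s(gU) e in V extended by a
   new vector e with f(gU) e = u0; the quotient (p * s) %/ f is what p carries over
   to u0. *)
Definition root_act (p : {poly K}) (x : V * {poly K}) : V * {poly K} :=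
  (peval gU p x.1 + peval gU ((p * x.2) %/ f) u0, (p * x.2) %% f).

Lemma root_act_mul p q x : root_act p (root_act q x) = root_act (p * q) x.
Proof.
rewrite /root_act /= modp_mul mulrA; congr (_, _).
rewrite (peval_additive gD) -!(pevalM gD gZ) -addrA -pevalD; congr (_ + peval _ _ u0).
by rewrite -mulrA [in RHS](divp_eq (q * x.2) f) mulrDr mulrA divpD mulpK.
Qed.

Lemma root_actD p q x : root_act (p + q) x = root_act p x + root_act q x.
Proof.
by rewrite /root_act mulrDl divpD modpD !pevalD addrACA.
Qed.

Lemma root_act_additive p : {morph root_act p : x y / x + y}.
Proof.
move=> x y; rewrite /root_act /= mulrDr divpD modpD pevalD (peval_additive gD).
by rewrite addrACA.
Qed.

Lemma root_act_scalable p : scalable (root_act p).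
Proof.
move=> c x; rewrite /root_act /= -scalerAr divpZl modpZl pevalZ.
by rewrite (peval_scalable gZ) -scalerDr.
Qed.

Lemma root_actC c (x : V * {poly K}) : (size x.2 < size f)%N -> root_act c%:P x = c *: x.
Proof.
move=> szx; rewrite /root_act !mul_polyC divpZl divp_small // scaler0 peval0 addr0.
by rewrite pevalC modpZl modp_small.
Qed.

Lemma root_act0 x : root_act 0 x = 0.
Proof. by rewrite /root_act !mul0r div0p mod0p !peval0 addr0. Qed.

Lemma root_act_root n : root_act (f ^+ n.+1) (0, 1) = (peval gU (f ^+ n) u0, 0).
Proof.
by rewrite /root_act /= mulr1 exprSr mulpK // modp_mull (lin0 (peval_scalable gZ _)) add0r.
Qed.

Lemma root_act_vec p a : root_act p (a, 0) = (peval gU p a, 0).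
Proof. by rewrite /root_act /= mulr0 div0p mod0p peval0 addr0. Qed.

Variable n : nat.
Hypotheses (f_irr : irreducible_poly f)
  (notin_Im : ~ exists y, peval gU (f ^+ n) u0 = peval gU (f ^+ n.+1) y).

(* If f^(n+1) kills a + s(gU) e with s <> 0, then s w0 = -f^(n+1) a, and inverting s
   modulo f^(n+1) (Bezout) would put w0 = f^n(gU) u0 into Im f^(n+1)(gU). *)
Lemma root_act_f_ker a (s : {poly K}) : (size s < size f)%N ->
  root_act (f ^+ n.+1) (a, s) = 0 -> s = 0.
Proof.
move=> szs [/= ker_a _]; apply/eqP; apply: contraT => s0; case: notin_Im.
set w0 := peval gU (f ^+ n) u0; set F := f ^+ n.+1.
have /Bezout_eq1_coprimepP [[A1 B1] /= bezout] : coprimep s F.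
  by rewrite coprimep_sym; apply: coprimep_expl; exact: coprimep_irr_small.
have quo : (F * s) %/ f = s * f ^+ n by rewrite /F exprSr mulrAC mulpK // mulrC.
have ker_s : peval gU s w0 = - peval gU F a.
  apply/eqP; rewrite -addr_eq0 addrC; apply/eqP.
  by rewrite -/F quo (pevalM gD gZ) in ker_a.
clearbody w0; exists (peval gU B1 w0 - peval gU A1 a).
rewrite (linB (peval_additive gD F) (peval_scalable gZ F)) !(peval_commute gD gZ F).
rewrite -[peval gU F a]opprK -ker_s (linN (peval_scalable gZ A1)) opprK.
by rewrite -!(pevalM gD gZ _ _ w0) -pevalD addrC bezout peval1.
Qed.

Lemma root_act_ker_stable h c (x : V * {poly K}) : monic_irr h -> (h = f -> c = n) ->
  ker_exp_stable gU h c -> (size x.2 < size f)%N ->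
  root_act (h ^+ c.+1) x = 0 -> root_act (h ^+ c) x = 0.
Proof.
move=> hh hfc hker; case: x => a s /= szs ker.
have s0 : s = 0.
  have [hf | hf] := eqVneq h f.
    by move: ker; rewrite hf (hfc hf); exact: root_act_f_ker.
  case: ker => _ /modp_eq0P dvd.
  exact: dvdp_coprime_small (coprimep_irr_neq f_irr hh f_monic hf) dvd szs.
by move: ker; rewrite s0 !root_act_vec => -[/hker ->].
Qed.

End AdjoinedRoot.

Section AdjoinRoot.
Variables (K : fieldType) (V : lmodType K) (gU : V -> V).
Hypotheses (gD : {morph gU : a b / a + b}) (gZ : scalable gU).
Variables (eps : {poly K} -> V) (B : set V).
Hypothesis hB : complement eps B.
Variables (f : {poly K}) (n : nat) (u0 : V).
Hypotheses (f_monic : f \is monic) (f_irr : irreducible_poly f)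
  (notin_Im : ~ exists y, peval gU (f ^+ n) u0 = peval gU (f ^+ n.+1) y)
  (B_w0 : B (peval gU (f ^+ n) u0)).

Local Notation d := (size f).-1.
Local Notation act := (root_act gU f u0).

Let reducedE (s : {poly K}) : (size s <= d)%N = (size s < size f)%N.
Proof. by case: f_irr => szf _; rewrite -ltnS prednK // ltnW. Qed.

Let size_act p x : (size (act p x).2 <= d)%N.
Proof. by rewrite reducedE ltn_modp monic_neq0. Qed.

Let size_shift_out_lt w : (size (shift_out hB d w).2 < size f)%N.
Proof. by rewrite -reducedE size_shift_out. Qed.

Definition adjoined (w : V) : V := shift_in hB d (act 'X (shift_out hB d w)).

Lemma peval_adjoined p w : peval adjoined p w = shift_in hB d (act p (shift_out hB d w)).
Proof.
elim/poly_ind: p w => [|p c IH] w.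
  by rewrite peval0 root_act0 (lin0 (shift_in_scalable hB d)).
rewrite pevalD peval_mulX pevalC IH shift_inK // (root_act_mul gD gZ u0 f_monic).
rewrite -{2}(shift_outK hB d w) -(shift_in_scalable hB d) -(@root_actC _ _ gU f u0 c) //.
by rewrite -(shift_in_additive hB d) -root_actD.
Qed.

Lemma adjoined_additive : {morph adjoined : a b / a + b}.
Proof.
move=> a b; rewrite /adjoined (shift_out_additive hB d).
by rewrite (root_act_additive gD) (shift_in_additive hB d).
Qed.

Lemma adjoined_scalable : scalable adjoined.
Proof.
move=> c a; rewrite /adjoined (shift_out_scalable hB d).
by rewrite (root_act_scalable gZ) (shift_in_scalable hB d).
Qed.

Lemma adjoined_B b : B b -> B (gU b) -> adjoined b = gU b.
Proof.
move=> Bb BgUb; rewrite /adjoined shift_out_B // root_act_vec pevalX.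
exact: shift_in_B.
Qed.

Lemma adjoined_ker_stable h c : monic_irr h -> (h = f -> c = n) ->
  ker_exp_stable gU h c -> ker_exp_stable adjoined h c.
Proof.
move=> hh hfc hker w; rewrite !peval_adjoined.
move=> /(congr1 (shift_out hB d)); rewrite shift_inK // (lin0 (shift_out_scalable hB d)).
move=> /(root_act_ker_stable gD gZ f_monic f_irr notin_Im hh hfc hker (size_shift_out_lt w)) ->.
exact: (lin0 (shift_in_scalable hB d)).
Qed.

Lemma adjoined_root : exists e, peval adjoined (f ^+ n.+1) e = peval gU (f ^+ n) u0.
Proof.
have sz1 : (size (1 : {poly K})%R <= d)%N by rewrite reducedE size_poly1; case: f_irr.
exists (shift_in hB d (0, 1)).
by rewrite peval_adjoined shift_inK // root_act_root // shift_in_B.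
Qed.

End AdjoinRoot.

Section ModuleUltrapower.
Variables (K : fieldType) (U : set_system nat).
Context {UU : UltraFilter U}.
Hypothesis U_cofinite : forall m, U (fun k => (m <= k)%N).
(* v identifies W' with the sequences in W modulo equality U-almost everywhere. *)
Variables (W W' : lmodType K) (v : (nat -> W) -> W').
Hypotheses (vD : forall x y, v (fun k => x k + y k) = v x + v y)
  (vZ : forall c x, v (fun k => c *: x k) = c *: v x)
  (v_eq : forall x y, v x = v y <-> U (fun k => x k = y k))
  (v_surj : forall w', exists x, w' = v x).

Definition diag_vec (w : W) : W' := v (fun _ => w).

Lemma diag_vec_additive : {morph diag_vec : a b / a + b}.
Proof. by move=> a b; rewrite /diag_vec -vD. Qed.

Lemma diag_vec_scalable : scalable diag_vec.
Proof. by move=> c a; rewrite /diag_vec -vZ. Qed.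

Section UltraEndo.
Variable g : W -> W.
Hypotheses (gD : {morph g : a b / a + b}) (gZ : scalable g).

Definition ultra_endo (w' : W') : W' := v (fun k => g (sval (cid (v_surj w')) k)).

Lemma ultra_endoE x : ultra_endo (v x) = v (fun k => g (x k)).
Proof.
rewrite /ultra_endo; case: cid => /= y /esym /v_eq xy.
by apply/v_eq; apply: filterS xy => k ->.
Qed.

Lemma ultra_endo_additive : {morph ultra_endo : a b / a + b}.
Proof.
move=> a b; have [x ->] := v_surj a; have [y ->] := v_surj b.
by rewrite -vD !ultra_endoE -vD; congr v; apply/funext => k; rewrite gD.
Qed.

Lemma ultra_endo_scalable : scalable ultra_endo.
Proof.
move=> c a; have [x ->] := v_surj a.
by rewrite -vZ !ultra_endoE -vZ; congr v; apply/funext => k; rewrite gZ.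
Qed.

Lemma peval_ultra_endo (p : {poly K}) x :
  peval ultra_endo p (v x) = v (fun k => peval g p (x k)).
Proof.
elim/poly_ind: p x => [|p c IH] x.
  rewrite peval0 -(lin0 diag_vec_scalable); congr v; apply/funext => k.
  by rewrite peval0.
rewrite pevalD peval_mulX pevalC ultra_endoE IH -vZ -vD; congr v; apply/funext => k.
by rewrite pevalD peval_mulX pevalC.
Qed.

Lemma peval_ultra_endo_diag (p : {poly K}) w :
  peval ultra_endo p (diag_vec w) = diag_vec (peval g p w).
Proof. exact: peval_ultra_endo. Qed.

Lemma ultra_endo_ker_stable h c : ker_exp_stable g h c -> ker_exp_stable ultra_endo h c.
Proof.
move=> gker w'; have [x ->] := v_surj w'; rewrite !peval_ultra_endo.
rewrite -!(lin0 diag_vec_scalable) !v_eq.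
by apply: filterS => k /gker.
Qed.

Lemma ultra_endo_notin_Im (p : {poly K}) w :
  ~ (exists y, w = peval g p y) -> ~ exists y', diag_vec w = peval ultra_endo p y'.
Proof.
move=> notin [y']; have [x ->] := v_surj y'.
by rewrite peval_ultra_endo => /v_eq /filter_ex [k wk]; apply: notin; exists (x k).
Qed.

End UltraEndo.

Section ShiftedOrbit.
Variables (phi : W -> W) (w0 : W).
Hypothesis free_orbit : forall Q, peval phi Q w0 = 0 -> Q = 0.

(* The shift by X^k in coordinate k makes the image meet the diagonal only in 0: agreement
   with a constant at two coordinates k1 < k2 gives a relation P X^k1 = P X^k2 on the free
   orbit of w0. *)
Definition shifted_orbit (P : {poly K}) : W' := v (fun k => peval phi (P * 'X^k) w0).

Lemma shifted_orbit_additive : {morph shifted_orbit : P Q / P + Q}.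
Proof. by move=> P Q; rewrite -vD; congr v; apply/funext => k; rewrite mulrDl pevalD. Qed.

Lemma shifted_orbit_scalable : scalable shifted_orbit.
Proof. by move=> c P; rewrite -vZ; congr v; apply/funext => k; rewrite -scalerAl pevalZ. Qed.

Lemma shifted_orbit_diag w P : diag_vec w = shifted_orbit P -> P = 0.
Proof.
move=> /v_eq ae; have [k1 ek1] := filter_ex ae.
have [k2 [ek2 lt12]] := filter_ex (filterI ae (U_cofinite k1.+1)).
have /free_orbit/eqP : peval phi (P * 'X^k1 - P * 'X^k2) w0 = 0.
  by rewrite pevalB -ek1 -ek2 subrr.
rewrite subr_eq0; apply: contraTeq => P0.
apply/eqP => /(congr1 (fun p : {poly K} => size p)); rewrite /= !size_mulXn // => /addIn k12.
by rewrite k12 ltnn in lt12.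
Qed.

End ShiftedOrbit.

Section AdjoinRootUltrapower.
Local Open Scope classical_set_scope.
Variables (g : W -> W) (f : {poly K}) (n : nat) (u0 : W).
Hypotheses (gD : {morph g : a b / a + b}) (gZ : scalable g)
  (f_monic : f \is monic) (f_irr : irreducible_poly f)
  (notin_Im : ~ exists y, peval g (f ^+ n) u0 = peval g (f ^+ n.+1) y)
  (f_ker : ker_exp_stable g f n).

Theorem ultrapower_adjoin_root : exists g' : W' -> W',
  [/\ {morph g' : a b / a + b}, scalable g',
      (forall w, g' (diag_vec w) = diag_vec (g w)),
      (forall h c, monic_irr h -> (h = f -> c = n) ->
         ker_exp_stable g h c -> ker_exp_stable g' h c) &
      exists e, peval g' (f ^+ n.+1) e = diag_vec (peval g (f ^+ n) u0)].
Proof.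
set w0 := peval g (f ^+ n) u0.
have free := peval_orbit_free gD gZ notin_Im f_ker.
pose eps := shifted_orbit (peval g f) w0.
have gUD := ultra_endo_additive gD; have gUZ := ultra_endo_scalable gZ.
have gU_diag w : ultra_endo g (diag_vec w) = diag_vec (g w) by exact: ultra_endoE.
have [B AB hB] : exists2 B, (fun a => exists w, a = diag_vec w) `<=` B & complement eps B.
  apply: exists_complement.
  - exact: shifted_orbit_additive.
  - exact: shifted_orbit_scalable.
  - exact: subspace_range diag_vec_additive diag_vec_scalable.
  - by move=> _ P [w ->]; exact: shifted_orbit_diag free w P.
have notin_Im' : ~ exists y,
    peval (ultra_endo g) (f ^+ n) (diag_vec u0) = peval (ultra_endo g) (f ^+ n.+1) y.
  rewrite peval_ultra_endo_diag; apply: ultra_endo_notin_Im.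
  by move=> [y e]; apply: notin_Im; exists y.
have B_w0 : B (peval (ultra_endo g) (f ^+ n) (diag_vec u0)).
  by rewrite peval_ultra_endo_diag; apply: AB; exists w0.
exists (adjoined (ultra_endo g) hB f (diag_vec u0)); split.
- exact: adjoined_additive.
- exact: adjoined_scalable.
- move=> w; rewrite adjoined_B; first exact: gU_diag.
    by apply: AB; exists w.
  by rewrite gU_diag; apply: AB; exists (g w).
- move=> h c hh hfc /ultra_endo_ker_stable hker.
  exact: (adjoined_ker_stable (hB := hB) gUD gUZ f_monic f_irr notin_Im' hh hfc hker).
have [e he] := adjoined_root gUD gUZ hB f_monic f_irr B_w0.
by exists e; rewrite he peval_ultra_endo_diag.
Qed.

End AdjoinRootUltrapower.
End ModuleUltrapower.

Theorem lemma3p11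
  (S : signature) (K : fieldType) (T : theory S) (D : vs_formulas S K)
  (hT : model_complete T) (hD : defines_vs_in D T)
  (C : kconf K) (hC : transcendental C)
  (M : structure S) (theta : M -> M) (hM : model_TthetaC D T C theta)
  (f : {poly K}) (hf : monic_irr f) (n : nat) (hn : kc C f = Some n)
  (v : M)
  (hv1 : inIm D theta (f ^+ n) v) (hv2 : ~ inIm D theta (f ^+ n.+1) v) :
  exists (M' : structure S) (theta' : M' -> M') (e : M -> M'),
    [/\ embedding e,
        (forall x : M, e (theta x) = theta' (e x)),
        model_TthetaC D T C theta' &
        inIm D theta' (f ^+ n.+1) (e v)].
Proof.
have [[MT Mlin] MC] := hM; have [f_monic f_irr] := hf.
have [W [i hi]] := defines_vsP (hD M MT).
have [g [gD gZ theta_i theta_out]] := lin_endo_module hi Mlin.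
have gC := (C_endo_iff hi gD gZ theta_i C).1 MC.
have [u0 ev] := (inIm_iff hi gD gZ theta_i _ _).1 hv1; subst v.
have notin_Im : ~ exists y, peval g (f ^+ n) u0 = peval g (f ^+ n.+1) y.
  by move=> [y e]; apply: hv2; apply/(inIm_iff hi gD gZ theta_i); exists y; rewrite e.
have [U [UU U_cofinite]] := exists_nonprincipal_ultrafilter.
have M'T : model T (ultrapower U M) by exact: model_ultrapower.
have [W' [i' hi']] := defines_vsP (hD _ M'T).
have [g' [g'D g'Z g'_diag g'C [e he]]] := ultrapower_adjoin_root U_cofinite
  (vclassD hi hi') (vclassZ hi hi') (vclass_eq hi hi') (vclass_surj hi hi')
  gD gZ f_monic f_irr notin_Im (gC f n hf hn).
exists (ultrapower U M), (thetaOf i' g'), (diag U (M := M)); split.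
- exact: diag_embedding.
- exact: diag_thetaOf theta_i theta_out g'_diag.
- apply: (model_TthetaC_thetaOf (C := C) hi' M'T g'D g'Z) => h c hh hc.
  by apply: g'C hh _ (gC h c hh hc) => hf'; move: hc; rewrite hf' hn => -[].
apply/(inIm_iff hi' g'D g'Z (thetaOf_i hi' g')); exists e.
by rewrite (diag_i hi hi') he.
Qed.
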